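(* Let $\alpha,\beta,\gamma,x\in\mathbb{N}_0$ with $(\alpha,\beta,\gamma,x)\neq(0,0,0,0)$, let $\lambda$ be a nonnegative integer and $n$ a nonnegative integer. Then $$A^{\lambda,x}_{n+1}(\alpha,\beta,\gamma)=\gamma\, A^{\lambda,x}_{n}(\alpha,\beta,\gamma+\alpha)+\sum_{k=0}^{n}\binom{n}{k}A^{0,x}_k(\alpha,\beta,\gamma)\,A^{\lambda,x}_{n-k+1}(\alpha,\beta,0).$$
   Context: For a number $t$ and $\alpha$, the generalised factorial is $(t|\alpha)_n=\prod_{j=0}^{n-1}(t-j\alpha)$ for $n\ge 1$ and $(t|\alpha)_0=1$. For parameters $\alpha,\beta,\gamma$, the generalised Stirling numbers $S(n,k,\alpha,\beta,\gamma)$ ($0\le k\le n$) are defined by the polynomial identity $(t|\alpha)_n=\sum_{k=0}^{n}S(n,k,\alpha,\beta,\gamma)\,(t-\gamma|\beta)_k$ in the variable $t$. For a nonnegative integer $\lambda$ put $\binom{k+\lambda-1}{k}=\lambda(\lambda+1)\cdots(\lambda+k-1)/k!$ (equal to $1$ for $k=0$, and for $\lambda=0$ equal to $0$ for $k\ge1$). Define $$A^{\lambda,x}_n(\alpha,\beta,\gamma)=\sum_{k=0}^{n}\binom{k+\lambda-1}{k}(-1)^{n+k}\beta^k k!\,S(n,k,\alpha,-\beta,-\gamma)\,x^k .$$ *)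

From mathcomp Require Import all_boot all_algebra.
Set Implicit Arguments. Unset Strict Implicit. Unset Printing Implicit Defensive.
Import GRing.Theory Num.Theory.
Local Open Scope ring_scope.

(* generalised factorial (t - c | b)_n as a polynomial in t over int:
   prod_{j<n} (t - c - j b).  (t|a)_n is gfact_shift a 0 n. *)
Definition gfact_shift (b c : int) (n : nat) : {poly int} :=
  \prod_(j < n) ('X - (c + j%:Z * b)%:P).

(* S is "the" generalised Stirling family: for all parameters (a,b,c),
   (t|a)_n = sum_{k=0}^n S a b c n k (t - c | b)_k as polynomials in t. *)
Definition is_gen_stirling (S : int -> int -> int -> nat -> nat -> int) : Prop :=
  forall (a b c : int) (n : nat),
    gfact_shift a 0 n = \sum_(k < n.+1) (S a b c n k) *: gfact_shift b c k.

Definition Apoly (S : int -> int -> int -> nat -> nat -> int)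
  (lam : nat) (x : int) (n : nat) (a b c : int) : int :=
  \sum_(k < n.+1) ('C(k + lam - 1, k))%:R * (-1) ^+ (n + k) * b ^+ k
     * (k`!)%:R * S a (- b) (- c) n k * x ^+ k.

(* With (y|A)_n the falling factorial of step A and
   conv(u, v)_n = sum_j C(n, j) u_j v_(n-j), Vandermonde's identity
   (y + z|A)_n = conv((y|A)_., (z|A)_.)_n applied to t = c + (t - c) and
   expanded in the basis (t - c|b)_k shows that S(n, k, a, b, c) is the
   binomial convolution of (c|a)_j with S(n - j, k, a, b, 0).  Consequently
   A^{lam,x}_n(a, b, c) = conv(<c|a>_., A^{lam,x}_.(a, b, 0))_n with the rising
   factorial <c|a>_j = c (c + a) ... (c + (j - 1) a), and A^{0,x}_k(a, b, c) =
   <c|a>_k.  The theorem is Pascal's rule for binomial convolutions together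
   with <c|a>_(j+1) = c <c + a|a>_j. *)

From mathcomp Require Import all_boot all_algebra.
From mathcomp Require Import ring.
Set Implicit Arguments. Unset Strict Implicit.
Import GRing.Theory.
Local Open Scope ring_scope.

Section GeneralisedFactorial.
Variable R : comNzRingType.

Definition gfact (A y : R) (n : nat) : R := \prod_(i < n) (y - i%:R * A).

Definition binconv (u v : nat -> R) (n : nat) : R :=
  \sum_(j < n.+1) 'C(n, j)%:R * u j * v (n - j)%N.

Lemma gfact0 (A y : R) : gfact A y 0 = 1.
Proof. by rewrite /gfact big_ord0. Qed.

Lemma gfactS (A y : R) n : gfact A y n.+1 = gfact A y n * (y - n%:R * A).
Proof. by rewrite /gfact big_ord_recr. Qed.

Lemma gfactSl (A y : R) n : gfact A y n.+1 = y * gfact A (y - A) n.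
Proof.
rewrite /gfact big_ord_recl /= mul0r subr0; congr (_ * _).
by apply: eq_bigr => i _; rewrite /bump /= add1n -addn1 natrD; ring.
Qed.

Lemma gfact_opp (A y : R) n : gfact A (- y) n = (-1) ^+ n * gfact (- A) y n.
Proof.
elim: n => [|n IHn]; first by rewrite !gfact0 mulr1.
by rewrite !gfactS IHn exprS; ring.
Qed.

Lemma binconvZl (c : R) u v n :
  binconv (fun j => c * u j) v n = c * binconv u v n.
Proof. by rewrite /binconv mulr_sumr; apply: eq_bigr => j _; ring. Qed.

Lemma binconvS u v n :
  binconv u v n.+1 = binconv (fun j => u j.+1) v n + binconv u (fun j => v j.+1) n.
Proof.
rewrite /binconv big_ord_recl /= bin0 subn0 mul1r.
under eq_bigr => j _ do rewrite /bump /= add1n binS subSS natrD !mulrDl.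
rewrite big_split /= addrA [RHS]addrC; congr (_ + _).
rewrite [in RHS]big_ord_recl /= bin0 subn0 mul1r; congr (_ + _).
rewrite big_ord_recr /= bin_small // !mul0r addr0.
by apply: eq_bigr => j _; rewrite /bump /= add1n subnSK.
Qed.

Lemma gfactD (A y z : R) n :
  gfact A (y + z) n = binconv (gfact A y) (gfact A z) n.
Proof.
elim: n => [|n IHn]; first by rewrite /binconv big_ord1 bin0 subn0 !gfact0 !mulr1.
rewrite gfactS IHn binconvS /binconv -big_split /= big_distrl /=.
apply: eq_bigr => j _; rewrite !gfactS.
have -> : (n%:R : R) = j%:R + (n - j)%:R by rewrite -natrD subnKC // -ltnS.
ring.
Qed.

End GeneralisedFactorial.

Lemma rmorph_gfact (R R' : comNzRingType) (f : {rmorphism R -> R'}) (A y : R) n :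
  f (gfact A y n) = gfact (f A) (f y) n.
Proof.
by rewrite rmorph_prod; apply: eq_bigr => i _; rewrite rmorphB rmorphM rmorph_nat.
Qed.

Lemma monic_basis_coef_inj (R : nzRingType) (p : nat -> {poly R}) (f g : nat -> R) m :
  (forall k, p k \is monic) -> (forall k, size (p k) = k.+1) ->
  \sum_(k < m) f k *: p k = \sum_(k < m) g k *: p k -> forall k, (k < m)%N -> f k = g k.
Proof.
move=> monic_p size_p; elim: m => [//|m IHm].
rewrite !big_ord_recr /= => eq_sum.
have coef_m (h : nat -> R) : (\sum_(k < m) h k *: p k + h m *: p m)`_m = h m.
  rewrite coefD coefZ coef_sum big1 ?add0r => [|k _].
    by rewrite -[m in _`_m]/(m.+1.-1) -(size_p m) -lead_coefE (monicP (monic_p m)) mulr1.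
  by rewrite coefZ nth_default ?mulr0 // size_p.
have eq_m : f m = g m by rewrite -coef_m eq_sum coef_m.
move=> k; rewrite ltnS leq_eqVlt => /orP[/eqP -> //|]; apply: IHm.
by move: eq_sum; rewrite eq_m => /addIr.
Qed.

Lemma gfact_shiftE (b c : int) n : gfact_shift b c n = gfact b%:P ('X - c%:P) n.
Proof.
by apply: eq_bigr => i _; rewrite polyCD polyCM -natz rmorph_nat; ring.
Qed.

Lemma gfact_shift_monic (b c : int) k : gfact_shift b c k \is monic.
Proof. exact: monic_prod_XsubC. Qed.

Lemma size_gfact_shift (b c : int) k : size (gfact_shift b c k) = k.+1.
Proof.
by rewrite /gfact_shift -(big_mkord xpredT (fun j : nat => 'X - (c + j%:Z * b)%:P))
  size_prod_XsubC size_iota subn0.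
Qed.

Lemma gfact_shift_comp (b c d : int) k :
  gfact_shift b c k \Po ('X + d%:P) = gfact_shift b (c - d) k.
Proof.
rewrite /gfact_shift rmorph_prod; apply: eq_bigr => i _ /=.
by rewrite comp_polyB comp_polyX comp_polyC !polyCD polyCN; ring.
Qed.

Section GeneralisedStirling.
Variable S : int -> int -> int -> nat -> nat -> int.
Hypothesis HS : is_gen_stirling S.

Lemma gfact_XsubC_expand (a b c : int) m :
  gfact a%:P ('X - c%:P) m = \sum_(k < m.+1) S a b 0 m k *: gfact_shift b c k.
Proof.
have := congr1 (comp_poly ('X + (- c)%:P)) (HS a b 0 m).
rewrite gfact_shift_comp raddf_sum sub0r opprK gfact_shiftE => ->.
by apply: eq_bigr => k _ /=; rewrite linearZ /= gfact_shift_comp sub0r opprK.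
Qed.

(* [S] is only constrained for [k <= m]; [stirling0] replaces its junk values by 0. *)
Definition stirling0 (a b : int) (m k : nat) : int :=
  if (k <= m)%N then S a b 0 m k else 0.

Lemma sum_stirling0 (a b c : int) m n : (m <= n)%N ->
  \sum_(k < n.+1) stirling0 a b m k *: gfact_shift b c k
  = \sum_(k < m.+1) S a b 0 m k *: gfact_shift b c k.
Proof.
move=> le_mn; rewrite (big_ord_widen n.+1 (fun k => S a b 0 m k *: gfact_shift b c k)) ?ltnS //.
rewrite [RHS]big_mkcond; apply: eq_bigr => k _; rewrite /stirling0 ltnS.
by case: ifP; rewrite ?scale0r.
Qed.

Lemma stirling_conv (a b c : int) n k : (k <= n)%N ->
  S a b c n k = binconv (gfact a c) (fun m => stirling0 a b m k) n.
Proof.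
move=> le_kn.
pose g i := binconv (gfact a c) (fun m => stirling0 a b m i) n.
apply: (monic_basis_coef_inj (m := n.+1) (f := S a b c n) (g := g) (gfact_shift_monic b c)
  (size_gfact_shift b c) _ le_kn).
rewrite -HS gfact_shiftE.
have -> : 'X - 0%:P = c%:P + ('X - c%:P) :> {poly int} by rewrite subr0 addrC subrK.
rewrite gfactD /binconv.
under [RHS]eq_bigr => i _ do rewrite scaler_suml.
rewrite exchange_big /=; apply: eq_bigr => j _.
rewrite (gfact_XsubC_expand a b) -(sum_stirling0 a b c (leq_subr j n)) mulr_sumr.
apply: eq_bigr => i _.
by rewrite -rmorph_gfact -(rmorph_nat (@polyC int)) -polyCM mul_polyC scalerA.
Qed.

Lemma stirling_k0 (a b c : int) n : S a b c n 0 = gfact a c n.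
Proof.
have := congr1 (horner^~ c) (HS a b c n).
rewrite horner_sum big_ord_recl big1 ?addr0 => [|k _].
  rewrite hornerZ /gfact_shift big_ord0 hornerC mulr1 horner_prod => <-.
  by apply: eq_bigr => i _; rewrite hornerXsubC add0r -natz.
rewrite hornerZ /gfact_shift horner_prod big_ord_recl /=.
by rewrite hornerXsubC mul0r addr0 subrr mul0r mulr0.
Qed.

Definition Apoly_term (lam : nat) (x b : int) (m k : nat) (s : int) : int :=
  'C(k + lam - 1, k)%:R * (-1) ^+ (m + k) * b ^+ k * k`!%:R * s * x ^+ k.

Lemma Apoly_widen lam x m N a b : (m <= N)%N ->
  Apoly S lam x m a b 0 = \sum_(k < N.+1) Apoly_term lam x b m k (stirling0 a (- b) m k).
Proof.
move=> le_mN; rewrite /Apoly oppr0.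
rewrite (big_ord_widen N.+1 (fun k => Apoly_term lam x b m k (S a (- b) 0 m k))) ?ltnS //.
rewrite big_mkcond; apply: eq_bigr => k _; rewrite /stirling0 ltnS.
by case: ifP; rewrite /Apoly_term ?mulr0 ?mul0r.
Qed.

Lemma Apoly_conv lam x N a b g :
  Apoly S lam x N a b g = binconv (gfact (- a) g) (fun m => Apoly S lam x m a b 0) N.
Proof.
rewrite /binconv.
under [RHS]eq_bigr => j _ do rewrite (@Apoly_widen lam x (N - j) N) ?leq_subr // mulr_sumr.
rewrite exchange_big /Apoly; apply: eq_bigr => k _ /=.
rewrite (stirling_conv _ _ _ (leq_ord k)) /binconv mulr_sumr mulr_suml.
apply: eq_bigr => j _; rewrite gfact_opp /Apoly_term.
have -> : (N + k = j + (N - j + k))%N by rewrite addnA subnKC // -ltnS.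
rewrite exprD; set s := (-1) ^+ j : int.
have signK (c : int) : s * (s * c) = c by rewrite mulrA -exprMn mulrNN mulr1 expr1n mul1r.
by rewrite -[RHS]signK; ring.
Qed.

Lemma Apoly_lam0 x k a b g : Apoly S 0 x k a b g = gfact (- a) g k.
Proof.
rewrite /Apoly big_ord_recl big1 ?addr0 => [|i _].
  rewrite /= stirling_k0 gfact_opp !expr0 !mulr1 mul1r mulrA -exprD addn0 addnn.
  by rewrite -signr_odd odd_double expr0 mul1r.
by rewrite lift0 addn0 subn1 /= bin_small // !mul0r.
Qed.

End GeneralisedStirling.

Theorem theorem3 (S : int -> int -> int -> nat -> nat -> int)
  (HS : is_gen_stirling S)
  (alpha beta gamma x lam n : nat)
  (Hnz : (alpha, beta, gamma, x) <> (0%N, 0%N, 0%N, 0%N)) :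
  Apoly S lam x%:Z n.+1 alpha%:Z beta%:Z gamma%:Z =
    gamma%:Z * Apoly S lam x%:Z n alpha%:Z beta%:Z (gamma + alpha)%:Z
    + \sum_(k < n.+1) ('C(n, k))%:R * Apoly S 0 x%:Z k alpha%:Z beta%:Z gamma%:Z
                      * Apoly S lam x%:Z (n - k).+1 alpha%:Z beta%:Z 0.
Proof.
rewrite !(Apoly_conv HS) binconvS PoszD; congr (_ + _).
  rewrite -binconvZl; apply: eq_bigr => j _.
  by rewrite gfactSl opprK.
by apply: eq_bigr => k _; rewrite (Apoly_lam0 HS).
Qed.
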